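(* A subspace $\mathcal{U}$ of $\mathbb{R}^n$ is not realizable if and only if there is a diagonal $n\times n$ matrix $D$ with $\operatorname{tr}(D)>0$ and $v^TDv\le 0$ for all $v\in\mathcal{U}^\perp$.
   Context: A correlation matrix is a positive semidefinite matrix with all diagonal entries equal to $1$. A subspace $\mathcal{U}\subseteq\mathbb{R}^n$ is realizable if there is an $n\times n$ correlation matrix whose nullspace contains $\mathcal{U}$. *)

From HB Require Import structures.
From mathcomp Require Import all_boot all_order all_algebra.
From mathcomp Require Import reals.
Set Implicit Arguments. Unset Strict Implicit. Unset Printing Implicit Defensive.
Import Order.TTheory GRing.Theory Num.Theory.
Local Open Scope ring_scope.

(* Subspaces of R^n are represented (mxalgebra style) as row spaces of
   matrices U : 'M[R]_(m, n); vectors are row vectors 'rV[R]_n, and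
   v \in U means (v <= U)%MS. *)

Definition psd (R : realFieldType) (n : nat) (A : 'M[R]_n) : Prop :=
  A^T = A /\ forall x : 'rV[R]_n, 0 <= (x *m A *m x^T) 0 0.

Definition correlation_matrix (R : realFieldType) (n : nat) (C : 'M[R]_n) : Prop :=
  psd C /\ forall i : 'I_n, C i i = 1.

Definition in_nullspace (R : realFieldType) (n : nat) (C : 'M[R]_n) (x : 'rV[R]_n) : Prop :=
  C *m x^T = 0.

Definition realizable (R : realFieldType) (m n : nat) (U : 'M[R]_(m, n)) : Prop :=
  exists C : 'M[R]_n, correlation_matrix C /\
    forall u : 'rV[R]_n, (u <= U)%MS -> in_nullspace C u.

Definition in_orth_compl (R : realFieldType) (m n : nat) (U : 'M[R]_(m, n)) (v : 'rV[R]_n) : Prop :=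
  forall u : 'rV[R]_n, (u <= U)%MS -> (u *m v^T) 0 0 = 0.

(* If [C] is PSD with [U] in its kernel, it is a sum of rank-one matrices [c^T c] with
   [c] orthogonal to [U], so [tr (D C) <= 0]; for a correlation matrix [tr (D C) = tr D].
   Conversely, minimize the squared distance [sum_i (C_ii - 1)^2] from the diagonal of
   [C] to the all-ones vector over such [C] (on a compact truncation); it is positive when
   [U] is not realizable. The first-order conditions of the minimum along the directions
   [C], [-C] and [v^T v] for [v] orthogonal to [U] show that [D = diag (1 - C_ii)] works:
   they give [sum_i (C_ii - 1) C_ii = 0], whence [tr D = sum_i (1 - C_ii)^2 > 0], and
   [v D v^T <= 0]. *)

From HB Require Import structures.
From mathcomp Require Import all_boot all_order all_algebra.
From mathcomp Require Import reals.
From mathcomp Require Import boolp classical_sets topology normedtype derive.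
From mathcomp Require Import matrix_normedtype.
From mathcomp Require Import ring lra.
Set Implicit Arguments. Unset Strict Implicit. Unset Printing Implicit Defensive.
Import Order.TTheory GRing.Theory Num.Theory.
Import numFieldTopology.Exports numFieldNormedType.Exports.
Local Open Scope ring_scope.

Section QuadraticForms.
Variables (R : realFieldType) (n : nat).
Implicit Types (C D : 'M[R]_n) (v y z : 'rV[R]_n).

Lemma qf_delta C i j : (('e_i : 'rV_n) *m C *m ('e_j : 'rV_n)^T) 0 0 = C i j.
Proof. by rewrite -rowE trmx_delta -colE !mxE. Qed.

Lemma qf_sym C y z : C^T = C -> (z *m C *m y^T) 0 0 = (y *m C *m z^T) 0 0.
Proof.
move=> sC; have -> : y *m C *m z^T = (z *m C *m y^T)^T.
  by rewrite !trmx_mul trmxK sC mulmxA.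
by rewrite [RHS]mxE.
Qed.

Lemma qfDZ C y z t :
  ((y + t *: z) *m C *m (y + t *: z)^T) 0 0 =
  (y *m C *m y^T) 0 0 + t * ((y *m C *m z^T) 0 0 + (z *m C *m y^T) 0 0)
  + t ^+ 2 * (z *m C *m z^T) 0 0.
Proof.
rewrite linearD linearZ /= !mulmxDl !mulmxDr -!scalemxAl -!scalemxAr !mxE.
by rewrite expr2; ring.
Qed.

Lemma qf_diag D v : is_diag_mx D ->
  (v *m D *m v^T) 0 0 = \sum_i D i i * v 0 i ^+ 2.
Proof.
move=> /is_diag_mxP D_diag; rewrite mxE; apply: eq_bigr => i _.
rewrite mxE (bigD1 i) //= big1 ?addr0 => [|j ji]; last first.
  by rewrite D_diag ?mulr0.
by rewrite !mxE expr2; ring.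
Qed.

Lemma mxtrace_diag_mul D C : is_diag_mx D -> \tr (D *m C) = \sum_i D i i * C i i.
Proof.
move=> /is_diag_mxP D_diag; apply: eq_bigr => i _.
rewrite mxE (bigD1 i) //= big1 ?addr0 // => j ji.
by rewrite D_diag ?mul0r // eq_sym.
Qed.

Lemma psd_diag_ge0 C i : psd C -> 0 <= C i i.
Proof. by case=> _ /(_ 'e_i); rewrite qf_delta. Qed.

Lemma psd_entry_le C i j M : psd C -> C i i <= M -> C j j <= M -> `|C i j| <= M.
Proof.
move=> [sC pC] Cii Cjj.
have Cji : C j i = C i j by rewrite -[in RHS]sC mxE.
have := pC ('e_i + 1 *: 'e_j); have := pC ('e_i + (-1) *: 'e_j).
rewrite !qfDZ !qf_delta Cji => ? ?.
rewrite ler_norml; apply/andP; split; nra.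
Qed.

Lemma psd_diag_eq0 C : psd C -> (forall i, C i i = 0) -> C = 0.
Proof.
move=> psdC C0; apply/matrixP => i j; rewrite mxE; apply/eqP; rewrite -normr_eq0.
by rewrite eq_le normr_ge0 andbT psd_entry_le ?C0.
Qed.

Lemma psdZ C a : 0 <= a -> psd C -> psd (a *: C).
Proof.
move=> a0 [sC pC]; split=> [|y]; first by rewrite linearZ /= sC.
by rewrite -scalemxAr -scalemxAl mxE mulr_ge0.
Qed.

Lemma psdD_rank1 C v s : 0 <= s -> psd C -> psd (C + s *: (v^T *m v)).
Proof.
move=> s0 [sC pC]; split=> [|y].
  by rewrite linearD /= linearZ /= trmx_mul trmxK sC.
rewrite mulmxDr mulmxDl mxE -scalemxAr -scalemxAl addr_ge0 // mxE.
have -> : y *m (v^T *m v) *m y^T = (y *m v^T) *m (y *m v^T)^T.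
  by rewrite trmx_mul trmxK !mulmxA.
by rewrite mulr_ge0 // [X in 0 <= X]mxE big_ord1 [X in _ * X]mxE -expr2 sqr_ge0.
Qed.

Lemma psd_schur C i : psd C -> 0 < C i i ->
  psd (C - (C i i)^-1 *: ((row i C)^T *m row i C)).
Proof.
move=> [sC pC] Cii; set a := (C i i)^-1; split.
  by rewrite linearB /= linearZ /= trmx_mul trmxK sC.
move=> y; set b := (y *m C *m ('e_i : 'rV_n)^T) 0 0.
have rank1 : (y *m ((row i C)^T *m row i C) *m y^T) 0 0 = b ^+ 2.
  have -> : y *m ((row i C)^T *m row i C) *m y^T
            = (y *m (row i C)^T) *m (row i C *m y^T) by rewrite !mulmxA.
  rewrite [LHS]mxE big_ord1 rowE trmx_mul sC mulmxA -/b expr2; congr (_ * _).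
  exact: qf_sym.
rewrite mulmxBr mulmxBl -scalemxAr -scalemxAl [X in 0 <= X]mxE [X in _ + X]mxE.
rewrite [X in _ - X]mxE rank1.
have := pC (y + (- (a * b)) *: 'e_i).
rewrite qfDZ qf_delta (qf_sym y 'e_i sC) -/b.
have aC : a * C i i = 1 by rewrite mulVf // gt_eqF.
have -> : (y *m C *m y^T) 0 0 + - (a * b) * (b + b) + (- (a * b)) ^+ 2 * C i i
   = (y *m C *m y^T) 0 0 - a * b ^+ 2 * (2 - a * C i i) by ring.
by rewrite aC (_ : (2 : R) - 1 = 1) ?mulr1 //; ring.
Qed.

End QuadraticForms.

Section PsdNull.
Variables (R : realFieldType) (m n : nat) (U : 'M[R]_(m, n)).
Implicit Types (C D : 'M[R]_n) (v x : 'rV[R]_n).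

Definition psd_null C := psd C /\ forall u, (u <= U)%MS -> in_nullspace C u.

Lemma psd_null0 : psd_null 0.
Proof.
split=> [|u _]; last by rewrite /in_nullspace mul0mx.
by split=> [|y]; rewrite ?trmx0 // mulmx0 mul0mx mxE.
Qed.

Lemma psd_nullZ C a : 0 <= a -> psd_null C -> psd_null (a *: C).
Proof.
move=> a0 [psdC nullC]; split=> [|u uU]; first exact: psdZ.
by rewrite /in_nullspace -scalemxAl nullC ?scaler0.
Qed.

Lemma orth_compl_mulmx C x : psd_null C -> in_orth_compl U (x *m C).
Proof.
move=> [[sC _] nullC] u uU.
by rewrite trmx_mul sC mulmxA -(trmxK (u *m C)) trmx_mul sC nullC // trmx0 mul0mx mxE.
Qed.

Lemma psd_nullD_rank1 C v s : 0 <= s -> in_orth_compl U v -> psd_null C ->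
  psd_null (C + s *: (v^T *m v)).
Proof.
move=> s0 vU [psdC nullC]; split=> [|u uU]; first exact: psdD_rank1.
have vu : v *m u^T = 0.
  by apply/matrixP => i j; rewrite !ord1 [RHS]mxE -(trmxK (v *m u^T)) trmx_mul trmxK mxE vU.
by rewrite /in_nullspace mulmxDl nullC // -scalemxAl -mulmxA vu mulmx0 scaler0 addr0.
Qed.

Lemma psd_null_schur C i : psd_null C -> 0 < C i i ->
  psd_null (C - (C i i)^-1 *: ((row i C)^T *m row i C)).
Proof.
move=> nullC Cii; split=> [|u uU]; first exact: psd_schur nullC.1 Cii.
have rowu : row i C *m u^T = 0 by rewrite rowE -mulmxA nullC.2 ?mulmx0.
by rewrite /in_nullspace mulmxBl -scalemxAl -mulmxA rowu mulmx0 scaler0 subr0 nullC.2.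
Qed.

(* Each Cholesky pivot step peels off a rank-one term [c^T c] with [c] orthogonal to [U]
   and creates a new zero on the diagonal. *)
Lemma mxtrace_mul_psd_null_le0 D C :
  (forall v, in_orth_compl U v -> (v *m D *m v^T) 0 0 <= 0) ->
  psd_null C -> \tr (D *m C) <= 0.
Proof.
move=> Dle0; have [k] := ubnP #|[set i | C i i != 0]|; elim: k C => // k IH C.
rewrite ltnS => supp_le nullC.
case: (pickP (fun i => C i i != 0)) => [i /= Cii_neq0 | C_diag0]; last first.
  by rewrite (psd_diag_eq0 nullC.1) ?mulmx0 ?mxtrace0 // => i; apply/eqP/negbFE/C_diag0.
have Cii : 0 < C i i by rewrite lt_def Cii_neq0 psd_diag_ge0 //; case: nullC.
set c := row i C; set a := (C i i)^-1; set C' := C - a *: (c^T *m c).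
have C'E j : C' j j = C j j - a * C i j ^+ 2.
  by rewrite !mxE big_ord1 !mxE expr2.
have trE : \tr (D *m C) = \tr (D *m C') + a * (c *m D *m c^T) 0 0.
  have tr11 (A : 'M[R]_1) : \tr A = A 0 0 by rewrite /mxtrace big_ord1.
  rewrite /C' mulmxBr -scalemxAr raddfB /= mxtraceZ mulmxA.
  by rewrite [\tr (_ *m c)]mxtrace_mulC mulmxA tr11 subrK.
have nullC' : psd_null C' by exact: psd_null_schur.
have supp : [set j | C' j j != 0] \subset [set j | C j j != 0] :\ i.
  apply/fintype.subsetP => j; rewrite !inE => C'jj; apply/andP; split.
    by apply: contra C'jj => /eqP ->; rewrite C'E expr2 mulrA mulVf // mul1r subrr.
  apply: contra C'jj => /eqP Cjj; rewrite eq_le psd_diag_ge0 ?andbT; last by case: nullC'.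
  by rewrite C'E Cjj sub0r oppr_le0 mulr_ge0 ?sqr_ge0 // invr_ge0 ltW.
have trC'_le0 : \tr (D *m C') <= 0.
  apply: IH nullC'; apply: leq_trans supp_le; apply: leq_ltn_trans (subset_leq_card supp) _.
  by rewrite [X in (_ < X)%N](cardsD1 i) inE Cii_neq0.
have pivot_le0 : a * (c *m D *m c^T) 0 0 <= 0.
  apply: mulr_ge0_le0; first by rewrite invr_ge0 ltW.
  by apply: Dle0; rewrite /c rowE; exact: orth_compl_mulmx.
by rewrite trE; lra.
Qed.

End PsdNull.

Section DiagonalDistance.
Variables (R : realFieldType) (n : nat).
Implicit Types (C E : 'M[R]_n).

Definition diag_dist C := \sum_i (C i i - 1) ^+ 2.

Lemma diag_distDZ C E s : diag_dist (C + s *: E) =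
  diag_dist C + s * (2 * \sum_i (C i i - 1) * E i i + s * \sum_i E i i ^+ 2).
Proof.
rewrite /diag_dist !mulr_sumr -big_split /= mulr_sumr -big_split /=.
by apply: eq_bigr => i _; rewrite !mxE; ring.
Qed.

Lemma diag_dist_eq0 C : diag_dist C = 0 -> forall i, C i i = 1.
Proof.
move=> /psumr_eq0P C1 i; apply/eqP; rewrite -subr_eq0 -sqrf_eq0.
by apply/eqP/C1 => // j _; exact: sqr_ge0.
Qed.

Lemma first_order_ge0 (a b eps : R) : 0 < eps ->
  (forall s, 0 < s -> s <= eps -> 0 <= s * (a + s * b)) -> 0 <= a.
Proof.
move=> eps0 ge0; rewrite leNgt; apply/negP => a_lt0.
pose s := Num.min eps (- a / (`|b| + 1)).
have b1 : 0 < `|b| + 1 by rewrite ltr_pwDr ?normr_ge0.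
have s0 : 0 < s by rewrite lt_min eps0 divr_gt0 // oppr_gt0.
have sb : s * (`|b| + 1) <= - a by rewrite -ler_pdivlMr // ge_min lexx orbT.
have : 0 <= s * (a + s * b) by apply: ge0 => //; rewrite ge_min lexx.
have := ler_norm b; have := ler_wpM2l (ltW s0) (ler_norm b); nra.
Qed.

End DiagonalDistance.

Section Minimizer.
Variables (R : realFieldType) (m n : nat) (U : 'M[R]_(m, n)) (M : R) (C : 'M[R]_n).
Hypotheses (nullC : psd_null U C) (C_slack : forall i, C i i + 1 <= M).
Hypothesis C_min : forall C2, psd_null U C2 -> (forall i, C2 i i <= M) ->
  diag_dist C <= diag_dist C2.

Lemma minimizer_first_order E :
  (forall s, 0 < s -> s <= 1 -> psd_null U (C + s *: E)) ->
  0 <= \sum_i (C i i - 1) * E i i.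
Proof.
move=> feasible; set a := \sum_i _.
pose eps := (1 + \sum_j `|E j j|)^-1.
have E_ge0 : 0 <= \sum_j `|E j j| by apply: sumr_ge0 => j _.
have eps_gt0 : 0 < eps by rewrite invr_gt0; lra.
suff : 0 <= 2 * a by rewrite pmulr_rge0.
apply: (first_order_ge0 (b := \sum_i E i i ^+ 2) eps_gt0) => s s0 s_eps.
have sE : s * (1 + \sum_j `|E j j|) <= 1 by rewrite -ler_pdivlMr ?mul1r //; lra.
have s1 : s <= 1 by nra.
have Eii i : s * E i i <= 1.
  apply: le_trans sE; rewrite ler_pM2l // (le_trans (ler_norm _)) //.
  by rewrite (bigD1 i) //= addrCA lerDl addr_ge0 // sumr_ge0.
have := C_min (feasible s s0 s1); rewrite diag_distDZ lerDl; apply=> i.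
by rewrite !mxE; have := C_slack i; have := Eii i; lra.
Qed.

Lemma minimizer_diag_orth : \sum_i (C i i - 1) * C i i = 0.
Proof.
apply/eqP; rewrite eq_le; apply/andP; split.
  have := @minimizer_first_order (- C); under eq_bigr do rewrite mxE mulrN.
  rewrite sumrN oppr_ge0; apply=> s _ s1.
  rewrite (_ : C + s *: - C = (1 - s) *: C); last by rewrite scalerBl scale1r scalerN.
  by apply: psd_nullZ; rewrite ?subr_ge0.
apply: minimizer_first_order => s s0 _.
rewrite (_ : C + s *: C = (1 + s) *: C); last by rewrite scalerDl scale1r.
by apply: psd_nullZ; rewrite // addr_ge0 // ltW.
Qed.

Lemma minimizer_orth_compl v : in_orth_compl U v ->
  \sum_i (1 - C i i) * v 0 i ^+ 2 <= 0.
Proof.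
move=> vU; rewrite -oppr_ge0 -sumrN.
have -> : \sum_i - ((1 - C i i) * v 0 i ^+ 2)
          = \sum_i (C i i - 1) * (v^T *m v) i i.
  by apply: eq_bigr => i _; rewrite !mxE big_ord1 !mxE expr2; ring.
apply: minimizer_first_order => s s0 _.
by apply: psd_nullD_rank1 => //; exact: ltW.
Qed.

Lemma minimizer_trace : \sum_i (1 - C i i) = diag_dist C.
Proof.
transitivity (diag_dist C - \sum_i (C i i - 1) * C i i).
  by rewrite /diag_dist -sumrB; apply: eq_bigr => i _; ring.
by rewrite minimizer_diag_orth subr0.
Qed.

End Minimizer.

Local Open Scope classical_set_scope.

Section Continuity.
Variables (T : topologicalType) (R : realType).

Lemma continuous_sum (I : Type) (r : seq I) (F : I -> T -> R) :
  (forall i, continuous (F i)) -> continuous (fun x => \sum_(i <- r) F i x).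
Proof.
move=> F_cont; elim: r => [|i r IH].
  by under eq_fun do rewrite big_nil; exact: cst_continuous.
by under eq_fun do rewrite big_cons; move=> x; apply: cvgD; [exact: F_cont|exact: IH].
Qed.

Lemma continuous_mul (f g : T -> R) :
  continuous f -> continuous g -> continuous (fun x => f x * g x).
Proof. by move=> f_cont g_cont x; apply: cvgM; [exact: f_cont | exact: g_cont]. Qed.

Lemma continuous_sub (f g : T -> R) :
  continuous f -> continuous g -> continuous (fun x => f x - g x).
Proof. by move=> f_cont g_cont x; apply: cvgB; [exact: f_cont | exact: g_cont]. Qed.

Lemma closed_eq_continuous (f g : T -> R) :
  continuous f -> continuous g -> closed [set x | f x = g x].
Proof.
move=> f_cont g_cont.
have -> : [set x | f x = g x] = (fun x => f x - g x) @^-1` [set 0].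
  by apply/seteqP; split=> x /= => [->|/eqP]; rewrite ?subrr // subr_eq0 => /eqP.
apply: preimage_closed; last exact: closed_eq.
by move=> x _; exact: continuous_sub.
Qed.

End Continuity.

Section ClosedConstraints.
Variables (T : topologicalType) (R : realType).

Lemma closed_forall (I : Type) (P : I -> set T) :
  (forall i, closed (P i)) -> closed [set x | forall i, P i x].
Proof.
move=> P_closed; rewrite (_ : [set x | _] = \bigcap_(i in setT) P i).
  by apply: closed_bigI => i _; exact: P_closed.
by apply/seteqP; split=> x /= Px i //; exact: Px.
Qed.

Lemma closed_implies (H : Prop) (P : set T) : closed P -> closed [set x | H -> P x].
Proof.
move=> P_closed; have [h|nh] := pselect H.
  by rewrite (_ : [set x | _] = P) //; apply/seteqP; split=> x /=; [apply|move=> ? _].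
by rewrite (_ : [set x | _] = setT) ?closedT //; apply/seteqP; split=> x // _ /nh.
Qed.

Lemma closed_le_continuous (f g : T -> R) :
  continuous f -> continuous g -> closed [set x | f x <= g x].
Proof.
move=> f_cont g_cont.
have -> : [set x | f x <= g x] = (fun x => g x - f x) @^-1` [set r | 0 <= r].
  by apply/seteqP; split=> x /=; rewrite subr_ge0.
apply: preimage_closed; last exact: closed_ge.
by move=> x _; exact: continuous_sub.
Qed.

Lemma closed_mx_eq p q (F G : T -> 'M[R]_(p, q)) :
  (forall i j, continuous (fun x => F x i j)) ->
  (forall i j, continuous (fun x => G x i j)) -> closed [set x | F x = G x].
Proof.
move=> F_cont G_cont.
rewrite (_ : [set x | _] = [set x | forall i j, F x i j = G x i j]).
  by do 2![apply: closed_forall => ?]; exact: closed_eq_continuous.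
by apply/seteqP; split=> x /= => [-> //|FG]; apply/matrixP.
Qed.

End ClosedConstraints.

Section VecMxContinuity.
Variables (R : realType) (p q : nat).

Lemma continuous_vec_mx_entry i j :
  continuous (fun x : 'rV[R]_(p * q) => vec_mx x i j).
Proof. by under eq_fun do rewrite mxE; exact: coord_continuous. Qed.

Lemma continuous_vec_mx_mulmx s (B : 'M[R]_(q, s)) i j :
  continuous (fun x : 'rV[R]_(p * q) => (vec_mx x *m B) i j).
Proof.
under eq_fun do rewrite mxE; apply: continuous_sum => k.
by apply: continuous_mul; [exact: continuous_vec_mx_entry | exact: cst_continuous].
Qed.

Lemma continuous_mulmx_vec_mx r s (A : 'M[R]_(r, p)) (B : 'M[R]_(q, s)) i j :
  continuous (fun x : 'rV[R]_(p * q) => (A *m vec_mx x *m B) i j).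
Proof.
under eq_fun do rewrite -mulmxA mxE; apply: continuous_sum => k.
by apply: continuous_mul; [exact: cst_continuous | exact: continuous_vec_mx_mulmx].
Qed.

End VecMxContinuity.

(* Matrices are encoded as vectors of [R^(n*n)], where bounded closed sets are compact. *)
Lemma exists_diag_dist_min (R : realType) m n (U : 'M[R]_(m, n)) (M : R) : 0 <= M ->
  exists C : 'M[R]_n, [/\ psd_null U C, (forall i, C i i <= M) &
    forall C2, psd_null U C2 -> (forall i, C2 i i <= M) -> diag_dist C <= diag_dist C2].
Proof.
move=> M0.
pose A := [set x : 'rV[R]_(n * n) | psd_null U (vec_mx x) /\ forall i, vec_mx x i i <= M].
have A0 : A 0.
  by rewrite /A /= linear0; split=> [|i]; [exact: psd_null0 | rewrite mxE].
have A_closed : closed A.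
  apply: closedI; last first.
    apply: closed_forall => i; apply: closed_le_continuous.
      exact: continuous_vec_mx_entry.
    exact: cst_continuous.
  apply: closedI; first apply: closedI.
  - apply: closed_mx_eq => i j; last exact: continuous_vec_mx_entry.
    by under eq_fun do rewrite mxE; exact: continuous_vec_mx_entry.
  - apply: closed_forall => y; apply: closed_le_continuous.
      exact: cst_continuous.
    exact: continuous_mulmx_vec_mx.
  - apply: closed_forall => u; apply: closed_implies; apply: closed_mx_eq => i j.
      exact: continuous_vec_mx_mulmx.
    exact: cst_continuous.
have A_bounded : bounded_set A.
  exists M; split=> [|N MN x [[psdx _] x_le]]; first exact: num_real.
  rewrite /= /Num.Def.normr /= mx_normrE; apply: bigmax_le => [|[k l] _ /=].
    by rewrite (le_trans M0) ?ltW.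
  rewrite (ord1 k); case/mxvec_indexP: l => i j.
  have -> : x 0 (mxvec_index i j) = vec_mx x i j by rewrite mxE.
  by apply: le_trans (ltW MN); apply: psd_entry_le.
have dist_cont : {within A, continuous (fun x => diag_dist (vec_mx x))}.
  apply: continuous_subspaceT; apply: continuous_sum => i.
  under eq_fun do rewrite expr2.
  by apply: continuous_mul; apply: continuous_sub;
    (exact: continuous_vec_mx_entry || exact: cst_continuous).
have A_compact := bounded_closed_compact A_bounded A_closed.
have [x Ax x_min] := compact_EVT_min (ex_intro _ 0 A0) A_compact dist_cont.
rewrite inE in Ax; case: Ax => nullC C_le.
exists (vec_mx x); split=> // C2 nullC2 C2_le.
by have := x_min (mxvec C2); rewrite /= mxvecK; apply; rewrite inE /A /= mxvecK.
Qed.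

(* Comparing with [C = 0] gives [diag_dist C <= n], hence [C i i <= n + 2]. *)
Lemma exists_diag_dist_min_slack (R : realType) m n (U : 'M[R]_(m, n)) :
  exists M (C : 'M[R]_n), [/\ psd_null U C, (forall i, C i i + 1 <= M) &
    forall C2, psd_null U C2 -> (forall i, C2 i i <= M) -> diag_dist C <= diag_dist C2].
Proof.
have M0 : (0 : R) <= n%:R + 3 by rewrite addr_ge0 ?ler0n.
have [C [nullC _ C_min]] := exists_diag_dist_min U M0.
exists (n%:R + 3), C; split=> // i.
have dist_le : diag_dist C <= n%:R.
  have := C_min 0 (psd_null0 U); rewrite {2}/diag_dist.
  under eq_bigr do rewrite mxE sub0r sqrrN expr1n.
  by rewrite sumr_const card_ord; apply=> j; rewrite mxE addr_ge0 ?ler0n.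
have : (C i i - 1) ^+ 2 <= diag_dist C.
  by rewrite /diag_dist (bigD1 i) //= lerDl sumr_ge0 // => j _; exact: sqr_ge0.
have := sqr_ge0 (2 * (C i i - 1) - 1); nra.
Qed.

Theorem lemma3p2 (R : realType) (n m : nat) (U : 'M[R]_(m, n)) :
  ~ realizable U <->
  exists D : 'M[R]_n, is_diag_mx D /\ 0 < \tr D /\
    forall v : 'rV[R]_n, in_orth_compl U v -> (v *m D *m v^T) 0 0 <= 0.
Proof.
split=> [not_real | [D [D_diag [trD_gt0 D_le0]]] [C [[psdC C_diag1] nullC]]]; last first.
  have := mxtrace_mul_psd_null_le0 D_le0 (conj psdC nullC).
  rewrite mxtrace_diag_mul //; under eq_bigr do rewrite C_diag1 mulr1.
  by move=> /(lt_le_trans trD_gt0); rewrite ltxx.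
have [M [C [nullC C_slack C_min]]] := exists_diag_dist_min_slack U.
exists (diag_mx (\row_i (1 - C i i))); split; first exact: diag_mx_is_diag.
split=> [|v vU].
  rewrite mxtrace_diag; under eq_bigr do rewrite mxE.
  rewrite (minimizer_trace nullC C_slack C_min) lt_def.
  rewrite sumr_ge0 ?andbT => [|i _]; last exact: sqr_ge0.
  apply/eqP => /diag_dist_eq0 C1; apply: not_real.
  by exists C; split=> //; case: nullC.
rewrite qf_diag ?diag_mx_is_diag //; under eq_bigr do rewrite !mxE eqxx mulr1n.
exact: minimizer_orth_compl nullC C_slack C_min v vU.
Qed.
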